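(* Let $G$ be a group, $\phi\in\mathrm{Aut}(G)$, $K\subseteq G\rtimes_\phi\mathbb{Z}$ and $t^rg\in G\rtimes_\phi\mathbb{Z}$ (with $r\in\mathbb{Z}$, $g\in G$). For $m\in\mathbb{Z}$ put $K_m=\{x\in G\mid t^mx\in K\}$. (i) If $r=0$, then $g$ is conjugate in $G\rtimes_\phi\mathbb{Z}$ to an element of $K$ if and only if there exists $k\in\mathbb{Z}$ such that $\phi^k(g)$ is conjugate in $G$ to an element of $K_0$. (ii) If $r\neq 0$, then $t^rg$ is conjugate in $G\rtimes_\phi\mathbb{Z}$ to an element of $K$ if and only if there exist $j\in\{0,1,\ldots,|r|-1\}$ and $z\in G$ such that $\phi^r(z)^{-1}\,\phi^j(g)\,z\in K_r$.
   Context: $G\rtimes_\phi\mathbb{Z}$ denotes the group generated by $G$ and a letter $t$ subject to the relations of $G$ and $t^{-1}at=\phi(a)$ for $a\in G$; every element is uniquely of the form $t^ag$ with $a\in\mathbb{Z}$, $g\in G$. The paper phrases the result as an equivalence of decision problems: $GCP_{(K,t^rg)}(G\rtimes_\phi\mathbb{Z})$ (does $t^rg$ have a conjugate in $K$) is equivalent to $GBrCP_{(K_0,\phi,g)}(G)$ when $r=0$, and to the disjunction over $j$ of $GTCP_{(K_r,\phi^r,\phi^j(g))}(G)$ (does $\phi^j(g)$ have a $\phi^r$-twisted conjugate $\phi^r(z)^{-1}\phi^j(g)z$ in $K_r$) when $r\neq0$. *)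

From Stdlib Require Import ZArith.
Open Scope Z_scope.

Record Group := {
  carrier :> Type;
  gmul : carrier -> carrier -> carrier;
  gone : carrier;
  ginv : carrier -> carrier;
  gmulA : forall x y z, gmul x (gmul y z) = gmul (gmul x y) z;
  gmul1 : forall x, gmul gone x = x;
  gmulV : forall x, gmul (ginv x) x = gone
}.

Arguments gmul {G} : rename.
Arguments gone {G} : rename.
Arguments ginv {G} : rename.

Record Aut (G : Group) := {
  aut :> G -> G;
  aut_inv : G -> G;
  aut_mul : forall x y, aut (gmul x y) = gmul (aut x) (aut y);
  aut_K : forall x, aut_inv (aut x) = x;
  aut_invK : forall x, aut (aut_inv x) = x
}.

Arguments aut_inv {G}.

Definition autpow {G : Group} (phi : Aut G) (k : Z) : G -> G :=
  fun x => if (0 <=? k) then Nat.iter (Z.to_nat k) (aut G phi) x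
           else Nat.iter (Z.to_nat (- k)) (aut_inv phi) x.

(* The semidirect product G x|_phi Z: the pair (a, g) represents t^a g,
   with t^{-1} x t = phi(x), so (t^a g)(t^b h) = t^(a+b) phi^b(g) h. *)
Definition sd_elt (G : Group) := (Z * G)%type.

Definition sd_mul {G : Group} (phi : Aut G) (x y : sd_elt G) : sd_elt G :=
  (fst x + fst y, gmul (autpow phi (fst y) (snd x)) (snd y)).

Definition sd_inv {G : Group} (phi : Aut G) (x : sd_elt G) : sd_elt G :=
  (- fst x, autpow phi (- fst x) (ginv (snd x))).

Definition sd_conj_into {G : Group} (phi : Aut G) (x : sd_elt G)
  (K : sd_elt G -> Prop) : Prop :=
  exists w : sd_elt G, K (sd_mul phi (sd_mul phi (sd_inv phi w) x) w).

Definition conj_into {G : Group} (x : G) (L : G -> Prop) : Prop :=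
  exists z : G, L (gmul (gmul (ginv z) x) z).

Definition slice {G : Group} (K : sd_elt G -> Prop) (m : Z) : G -> Prop :=
  fun x => K (m, x).

(** Conjugating [t^r g] by [t^c z] gives [t^r phi^r(z)^-1 phi^c(g) z], so [t^r g]
    is conjugate into [K] iff some [phi^c(g)] is [phi^r]-twisted conjugate into
    [K_r].  For [r = 0] twisted conjugacy is ordinary conjugacy.  For [r <> 0],
    since [phi^(c+r)(g) = phi^r(phi^c(g))] and [phi^r(x)] is [phi^r]-twisted
    conjugate to [x] for every [x], only [c] modulo [|r|] matters. *)

From Stdlib Require Import ZArith Lia.
Open Scope Z_scope.

Section GroupFacts.

Variable G : Group.
Implicit Types x y z : G.

Lemma gmulxV x : gmul x (ginv x) = gone.
Proof.
  set (y := ginv x).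
  rewrite <- (gmul1 G (gmul x y)), <- (gmulV G y) at 1.
  rewrite <- gmulA, (gmulA G y x y).
  unfold y at 2 3. rewrite gmulV, gmul1. apply gmulV.
Qed.

Lemma gmulx1 x : gmul x gone = x.
Proof. rewrite <- (gmulV G x), gmulA, gmulxV, gmul1. reflexivity. Qed.

Lemma gmulI x y z : gmul x y = gmul x z -> y = z.
Proof.
  intro E. rewrite <- (gmul1 G y), <- (gmul1 G z), <- (gmulV G x), <- !gmulA, E.
  reflexivity.
Qed.

Lemma ginv_unique x y : gmul x y = gone -> x = ginv y.
Proof.
  intro E. rewrite <- (gmulx1 x), <- (gmulxV y), gmulA, E, gmul1. reflexivity.
Qed.

Lemma ginvM x y : ginv (gmul x y) = gmul (ginv y) (ginv x).
Proof.
  symmetry. apply ginv_unique.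
  rewrite <- gmulA, (gmulA G (ginv x) x y), gmulV, gmul1, gmulV. reflexivity.
Qed.

Lemma ginvK x : ginv (ginv x) = x.
Proof. symmetry. apply ginv_unique, gmulxV. Qed.

Section Morphism.

Variable psi : G -> G.
Hypothesis psiM : forall x y, psi (gmul x y) = gmul (psi x) (psi y).

Lemma morph1 : psi gone = gone.
Proof.
  symmetry. apply (gmulI (psi gone)).
  rewrite <- psiM, gmul1, gmulx1. reflexivity.
Qed.

Lemma morphV x : psi (ginv x) = ginv (psi x).
Proof. apply ginv_unique. rewrite <- psiM, gmulV. apply morph1. Qed.

Definition twconj x z : G := gmul (gmul (ginv (psi z)) x) z.

Definition twisted_conj_into x (L : G -> Prop) : Prop := exists z, L (twconj x z).

Lemma twconj_morph x z : twconj (psi x) z = twconj x (gmul (ginv x) z).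
Proof.
  unfold twconj. rewrite psiM, morphV, ginvM, ginvK, <- !gmulA.
  rewrite (gmulA G x (ginv x) z), gmulxV, gmul1. reflexivity.
Qed.

Lemma twisted_conj_into_morph x L :
  twisted_conj_into (psi x) L <-> twisted_conj_into x L.
Proof.
  split; intros [z Hz].
  - exists (gmul (ginv x) z). rewrite <- twconj_morph. exact Hz.
  - exists (gmul x z). rewrite twconj_morph, gmulA, gmulV, gmul1. exact Hz.
Qed.

End Morphism.

End GroupFacts.

Arguments twconj {G}.
Arguments twisted_conj_into {G}.

Section AutPower.

Variables (G : Group) (phi : Aut G).

Lemma autpowS k x : autpow phi (k + 1) x = phi (autpow phi k x).
Proof.
  unfold autpow.
  destruct (Z.leb_spec 0 k).
  - rewrite (proj2 (Z.leb_le 0 (k + 1))) by lia.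
    replace (Z.to_nat (k + 1)) with (S (Z.to_nat k)) by lia. reflexivity.
  - destruct (Z.eq_dec k (-1)) as [->|].
    + simpl. rewrite aut_invK. reflexivity.
    + rewrite (proj2 (Z.leb_gt 0 (k + 1))) by lia.
      replace (Z.to_nat (- k)) with (S (Z.to_nat (- (k + 1)))) by lia.
      simpl. rewrite aut_invK. reflexivity.
Qed.

Lemma autpowP k x : autpow phi (k - 1) x = aut_inv phi (autpow phi k x).
Proof.
  replace k with (k - 1 + 1) at 2 by lia. rewrite autpowS, aut_K. reflexivity.
Qed.

Lemma autpowD a b x : autpow phi a (autpow phi b x) = autpow phi (a + b) x.
Proof.
  revert x. induction a using Z.peano_ind; intro x.
  - reflexivity.
  - rewrite <- Z.add_1_r, autpowS, IHa.
    replace (a + 1 + b) with (a + b + 1) by lia. rewrite autpowS. reflexivity.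
  - rewrite <- Z.sub_1_r, autpowP, IHa.
    replace (a - 1 + b) with (a + b - 1) by lia. rewrite autpowP. reflexivity.
Qed.

Lemma aut_invM x y :
  aut_inv phi (gmul x y) = gmul (aut_inv phi x) (aut_inv phi y).
Proof.
  rewrite <- (aut_invK G phi x) at 1. rewrite <- (aut_invK G phi y) at 1.
  rewrite <- aut_mul, aut_K. reflexivity.
Qed.

Lemma autpowM k x y :
  autpow phi k (gmul x y) = gmul (autpow phi k x) (autpow phi k y).
Proof.
  induction k using Z.peano_ind.
  - reflexivity.
  - rewrite <- Z.add_1_r, !autpowS, IHk, aut_mul. reflexivity.
  - rewrite <- Z.sub_1_r, !autpowP, IHk, aut_invM. reflexivity.
Qed.

Lemma sd_conj_pair c z r g :
  sd_mul phi (sd_mul phi (sd_inv phi (c, z)) (r, g)) (c, z) =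
  (r, twconj (autpow phi r) (autpow phi c g) z).
Proof.
  unfold sd_mul, sd_inv, twconj; simpl. f_equal; [lia|].
  rewrite autpowM, !autpowD, (morphV G _ (autpowM _)).
  replace (c + r + - c) with r by lia.
  replace (c + r + (- c + - r)) with 0 by lia. reflexivity.
Qed.

Lemma sd_conj_into_slice K r g :
  sd_conj_into phi (r, g) K <->
  exists c, twisted_conj_into (autpow phi r) (autpow phi c g) (slice K r).
Proof.
  unfold sd_conj_into, twisted_conj_into, slice. split.
  - intros [[c z] H]. rewrite sd_conj_pair in H. eauto.
  - intros [c [z H]]. exists (c, z). rewrite sd_conj_pair. exact H.
Qed.

End AutPower.

Lemma exists_periodic_mod (P : Z -> Prop) (r : Z) :
  r <> 0 -> (forall c, P (c + r) <-> P c) ->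
  (exists c, P c) <-> exists j, 0 <= j < Z.abs r /\ P j.
Proof.
  intros Hr Pr.
  assert (Pn : forall n c, P (c + r * n) <-> P c).
  { induction n using Z.peano_ind; intro c.
    - rewrite Z.mul_0_r, Z.add_0_r. reflexivity.
    - replace (c + r * Z.succ n) with (c + r * n + r) by lia.
      rewrite Pr. apply IHn.
    - rewrite <- (Pr (c + r * Z.pred n)).
      replace (c + r * Z.pred n + r) with (c + r * n) by lia. apply IHn. }
  split; [|intros [j [_ Pj]]; eauto].
  intros [c Pc]. exists (c mod Z.abs r).
  split; [apply Z.mod_pos_bound; lia|].
  assert (Hc : c = c mod Z.abs r + r * (Z.sgn r * (c / Z.abs r))).
  { rewrite Z.mul_assoc, Z.sgn_abs, Z.add_comm. apply Z.div_mod. lia. }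
  rewrite <- Pn, <- Hc. exact Pc.
Qed.

Theorem theorem3p1 (G : Group) (phi : Aut G) (K : sd_elt G -> Prop)
  (r : Z) (g : G) :
  (r = 0 ->
     (sd_conj_into phi (0, g) K <->
      exists k : Z, conj_into (autpow phi k g) (slice K 0))) /\
  (r <> 0 ->
     (sd_conj_into phi (r, g) K <->
      exists j : Z, 0 <= j < Z.abs r /\
        exists z : G,
          slice K r (gmul (gmul (ginv (autpow phi r z)) (autpow phi j g)) z))).
Proof.
  split.
  - intros _. apply sd_conj_into_slice.
  - intros Hr. rewrite sd_conj_into_slice. apply exists_periodic_mod; [exact Hr|].
    intro c. rewrite (Z.add_comm c r), <- autpowD.
    exact (twisted_conj_into_morph G _ (autpowM G phi r) _ _).
Qed.
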